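(* Let $k$ be a field of characteristic zero, ${\boldsymbol\lambda}\in M_n(k)$ antisymmetric, and $K=k_{\boldsymbol\lambda}(x_1,\dots,x_n)$. (a) If $B_{\boldsymbol\lambda}$ is the $k$-subspace of $K$ spanned by $\{\{f,g\}: f,g\in K\}$, then $B_{\boldsymbol\lambda}\cap k=\{0\}$. (b) For an $n$-tuple $y=(y_1,\dots,y_n)$ of nonzero elements of $K$, let $C_{\boldsymbol\lambda}(y)$ be the matrix $\big(\{y_i,y_j\}(y_iy_j)^{-1}\big)\in M_n(K)$, and let $C_{\boldsymbol\lambda}=\{C_{\boldsymbol\lambda}(y): y\in(K^\times)^n\}$. Then $C_{\boldsymbol\lambda}\cap M_n(k)=\{A{\boldsymbol\lambda}A^{\mathrm{tr}}: A\in M_n(\mathbb Z)\}$.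
   Context: For antisymmetric ${\boldsymbol\lambda}\in M_n(k)$, $k_{\boldsymbol\lambda}(x_1,\dots,x_n)$ is the rational function field $k(x_1,\dots,x_n)$ with the unique Poisson bracket satisfying $\{x_i,x_j\}=\lambda_{ij}x_ix_j$ for all $i,j$. *)

From HB Require Import structures.
From mathcomp Require Import all_boot all_order all_algebra.
From mathcomp Require Import fraction generic_quotient.
From mathcomp.multinomials Require Import mpoly.
Set Implicit Arguments. Unset Strict Implicit. Unset Printing Implicit Defensive.
Import Order.TTheory GRing.Theory Num.Theory.
Local Open Scope ring_scope.

Definition ratfun (k : fieldType) (n : nat) := {fraction {mpoly k[n]}}.

Definition ratC (k : fieldType) (n : nat) (c : k) : ratfun k n :=
  tofrac (c%:MP).

Definition ratX (k : fieldType) (n : nat) (i : 'I_n) : ratfun k n :=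
  tofrac ('X_i).

(* partial derivative d/dx_i on K, computed from any representative p/q by
   the quotient rule (p' q - p q') / q^2 (independent of the representative) *)
Definition ratD (k : fieldType) (n : nat) (i : 'I_n) (f : ratfun k n) : ratfun k n :=
  let r := repr f in
  let p := (frac r).1 in let q := (frac r).2 in
  tofrac (mderiv i p * q - p * mderiv i q) / tofrac (q ^+ 2).

(* the Poisson bracket of k_lambda(x_1..x_n):
   {f,g} = sum_{i,j} lambda_ij x_i x_j (df/dx_i) (dg/dx_j),
   i.e. the unique Poisson bracket with {x_i,x_j} = lambda_ij x_i x_j. *)
Definition pbracket (k : fieldType) (n : nat) (lam : 'M[k]_n)
  (f g : ratfun k n) : ratfun k n :=
  \sum_(i < n) \sum_(j < n)
     ratC n (lam i j) * ratX k i * ratX k j * ratD i f * ratD j g.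

Definition Cmat (k : fieldType) (n : nat) (lam : 'M[k]_n)
  (y : 'I_n -> ratfun k n) : 'M[ratfun k n]_n :=
  \matrix_(i, j) (pbracket lam (y i) (y j) / (y i * y j)).

From HB Require Import structures.
From mathcomp Require Import all_boot all_order all_algebra.
From mathcomp Require Import fraction generic_quotient.
From mathcomp.multinomials Require Import mpoly.
From mathcomp Require Import ring zify.
From Stdlib Require Import Lia.
Import Order.TTheory GRing.Theory Num.Theory.
Local Open Scope ring_scope.
Set Implicit Arguments. Unset Strict Implicit. Unset Printing Implicit Defensive.

(* Let d_i = x_i d/dx_i be the Euler derivations of K; they commute, and
   {f,g} = sum_ij lam_ij d_i f d_j g = sum_i d_i (sum_j lam_ij f d_j g), since the
   extra term sum_ij lam_ij f d_i d_j g vanishes by antisymmetry of lam.  So (a)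
   says that a divergence sum_i d_i H_i is never a nonzero constant c.  Over a common
   denominator Q this reads sum_i (d_i u_i Q - u_i d_i Q) = c Q^2.  The substitution
   x_i -> x_i^(B^i), with B larger than every exponent of Q, keeps this shape in
   characteristic 0 and gives Q a unique monomial x^m of top total degree; dividing
   x^((N+1) m) by Q then leaves a remainder of low degree, and counting degrees
   forces c = 0.
   For (b), the Laurent monomial y_i = x^(A_i) has d_a y_i / y_i = A_ia, whence
   C_lam(y) = A lam A^T.  Conversely, if C_lam(y) is constant, comparing coefficients
   at leading monomials shows that it is A lam A^T, where A_ia is the a-th exponent
   of the leading monomial of the numerator of y_i minus that of its denominator. *)

Section FractionRepresentatives.
Variable R : idomainType.
Local Notation "x %:F" := (@tofrac R x).

Lemma tofrac_repr (f : {fraction R}) : f = (\n_(repr f))%:F / (\d_(repr f))%:F.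
Proof.
rewrite -[f in LHS]reprK; have d0 := denom_ratioP (repr f).
unlock tofrac; rewrite [RHS]piE; apply/eqmodP.
rewrite /= FracField.equivfE /FracField.mulf /FracField.invf /=.
by rewrite !numden_Ratio ?oner_neq0 ?mulf_neq0 ?oner_neq0 //; apply/eqP; ring.
Qed.

Lemma tofrac_divP (f : {fraction R}) : exists (a b : R), b != 0 /\ f = a%:F / b%:F.
Proof. by exists (\n_(repr f)), (\d_(repr f)); split; [apply: denom_ratioP|apply: tofrac_repr]. Qed.

Lemma eq_tofrac_div (a b c d : R) : b != 0 -> d != 0 ->
  (a%:F / b%:F == c%:F / d%:F) = (a * d == c * b).
Proof. by move=> b0 d0; rewrite eqr_div ?tofrac_eq0 // -!tofracM tofrac_eq. Qed.

Lemma tofrac_div_congr (a b c d : R) : b != 0 -> d != 0 -> a * d = c * b ->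
  a%:F / b%:F = c%:F / d%:F.
Proof. by move=> b0 d0 e; apply/eqP; rewrite eq_tofrac_div // e. Qed.

Lemma tofrac_divD (a b c d : R) : b != 0 -> d != 0 ->
  a%:F / b%:F + c%:F / d%:F = (a * d + c * b)%:F / (b * d)%:F.
Proof. by move=> b0 d0; rewrite addf_div ?tofrac_eq0 // -!tofracM -tofracD. Qed.

Lemma tofrac_divM (a b c d : R) :
  (a%:F / b%:F) * (c%:F / d%:F) = (a * c)%:F / (b * d)%:F.
Proof. by rewrite mulf_div -!tofracM. Qed.

End FractionRepresentatives.

Section EulerOperator.
Variables (k : fieldType) (n : nat).
Local Notation R := {mpoly k[n]}.

(* Locked: otherwise rewriting with [meulerM] unfolds the inner operator of
   [meuler i (meuler j p)]. *)
Definition meuler_def (i : 'I_n) (p : R) : R := 'X_i * p^`M(i).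
Fact meuler_key : unit. Proof. by []. Qed.
Definition meuler := locked_with meuler_key meuler_def.
Lemma meulerE i p : meuler i p = 'X_i * p^`M(i).
Proof. by rewrite /meuler unlock. Qed.

Lemma mcoeff_meuler i p a : (meuler i p)@_a = (a i)%:R * p@_a.
Proof.
rewrite meulerE mulrC; have [ai|ai] := posnP (a i).
  rewrite ai mul0r; apply/memN_msupp_eq0.
  rewrite (perm_mem (msuppMX _ _)); apply/mapP => -[m' _ am].
  by move: ai; rewrite am mnmDE mnm1E eqxx.
have ea : a = (U_(i) + (a - U_(i)))%MM by rewrite addmC submK // lep1mP -lt0n.
rewrite {1}ea mcoeffMX mcoeff_deriv addmC -ea mnmBE mnm1E eqxx.
by rewrite subn1 prednK // mulr_natl.
Qed.

Lemma meuler_is_linear i : linear (meuler i).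
Proof.
by move=> c p q; apply/mpolyP => a; rewrite mcoeffD mcoeffZ !mcoeff_meuler mcoeffD mcoeffZ; ring.
Qed.

HB.instance Definition _ i := GRing.isLinear.Build k R R *:%R (meuler i)
  (meuler_is_linear i).

Lemma meulerC i c : meuler i c%:MP = 0.
Proof. by rewrite meulerE mderivC mulr0. Qed.

Lemma meulerM i p q : meuler i (p * q) = meuler i p * q + p * meuler i q.
Proof. by rewrite !meulerE mderivM; ring. Qed.

Lemma meulerX i m : meuler i 'X_[m] = (m i)%:R *: 'X_[m].
Proof.
apply/mpolyP => a; rewrite mcoeffZ mcoeff_meuler !mcoeffX.
by case: eqP => [->|_]; rewrite ?mulr0.
Qed.

Lemma meuler_comm i j p : meuler i (meuler j p) = meuler j (meuler i p).
Proof. by apply/mpolyP => a; rewrite !mcoeff_meuler; ring. Qed.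

Definition euler_num (i : 'I_n) (u q : R) : R := meuler i u * q - u * meuler i q.

End EulerOperator.

Section EulerOperatorFraction.
Variables (k : fieldType) (n : nat).
Local Notation R := {mpoly k[n]}.
Local Notation K := (ratfun k n).
Local Notation "x %:F" := (@tofrac R x).

Lemma ratD_frac i (p q : R) : q != 0 ->
  ratD i (p%:F / q%:F) = (p^`M(i) * q - p * q^`M(i))%:F / (q ^+ 2)%:F.
Proof.
move=> q0; rewrite /ratD; set f := p%:F / q%:F.
have := tofrac_repr f; have := denom_ratioP (repr f).
set p' := \n_(repr f); set q' := \d_(repr f) => q'0 E.
have pq' : p' * q = p * q' by apply/eqP; rewrite -eq_tofrac_div // -E.
have dpq' := congr1 (mderiv i) pq'; rewrite !mderivM in dpq'.
apply: tofrac_div_congr; rewrite ?expf_neq0 //; apply/eqP; rewrite -subr_eq0.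
have -> : (p'^`M(i) * q' - p' * q'^`M(i)) * q ^+ 2 -
   (p^`M(i) * q - p * q^`M(i)) * q' ^+ 2 =
   q * q' * ((p'^`M(i) * q + p' * q^`M(i)) - (p^`M(i) * q' + p * q'^`M(i)))
   - (p' * q - p * q') * (q * q'^`M(i) + q' * q^`M(i)) by ring.
by rewrite pq' dpq' !subrr mulr0 mul0r subrr.
Qed.

Definition feuler (i : 'I_n) (f : K) : K := ratX k i * ratD i f.

Lemma feuler_frac i (p q : R) : q != 0 ->
  feuler i (p%:F / q%:F) = (euler_num i p q)%:F / (q ^+ 2)%:F.
Proof.
move=> q0; rewrite /feuler ratD_frac // /ratX mulrA -tofracM.
suff -> : 'X_i * (p^`M(i) * q - p * q^`M(i)) = euler_num i p q by [].
by rewrite /euler_num !meulerE; ring.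
Qed.

Lemma feuler_is_zmod_morphism i : zmod_morphism (feuler i).
Proof.
move=> f g; have [a [b [b0 ->]]] := tofrac_divP f.
have [c [d [d0 ->]]] := tofrac_divP g.
rewrite -mulNr -tofracN tofrac_divD // !feuler_frac ?mulf_neq0 // -mulNr -tofracN.
rewrite tofrac_divD ?expf_neq0 //; apply: tofrac_div_congr; rewrite ?mulf_neq0 ?expf_neq0 //.
by rewrite /euler_num !raddfD !raddfN /= !meulerM; ring.
Qed.

HB.instance Definition _ i := GRing.isZmodMorphism.Build K K (feuler i)
  (feuler_is_zmod_morphism i).

Lemma feulerM i f g : feuler i (f * g) = feuler i f * g + f * feuler i g.
Proof.
have [a [b [b0 ->]]] := tofrac_divP f; have [c [d [d0 ->]]] := tofrac_divP g.
rewrite tofrac_divM !feuler_frac ?mulf_neq0 // !tofrac_divM.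
rewrite tofrac_divD ?mulf_neq0 ?expf_neq0 //.
apply: tofrac_div_congr; rewrite ?mulf_neq0 ?expf_neq0 //.
by rewrite /euler_num !meulerM; ring.
Qed.

Lemma feulerC i c : feuler i (ratC n c) = 0.
Proof.
rewrite /ratC -[_%:F]divr1 -tofrac1 feuler_frac ?oner_neq0 //.
by rewrite /euler_num -(mpolyC1 n k) !meulerC !(mulr0, mul0r) subrr tofrac0 mul0r.
Qed.

Lemma feulerCM i c f : feuler i (ratC n c * f) = ratC n c * feuler i f.
Proof. by rewrite feulerM feulerC mul0r add0r. Qed.

Lemma feuler_comm i j f : feuler i (feuler j f) = feuler j (feuler i f).
Proof.
have [a [b [b0 ->]]] := tofrac_divP f.
rewrite !feuler_frac ?expf_neq0 //; apply: tofrac_div_congr; rewrite ?expf_neq0 //.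
rewrite /euler_num !raddfB /= !meulerM.
by rewrite (meuler_comm i j a) (meuler_comm i j b); ring.
Qed.

End EulerOperatorFraction.

Section SizeBounds.
Variables (k : fieldType) (n : nat).
Local Notation R := {mpoly k[n]}.

Lemma msize_le_mdeg (p : R) B :
  (forall a, a \in msupp p -> mdeg a < B)%N -> (msize p <= B)%N.
Proof. by move=> h; rewrite msizeE; apply/bigmax_leqP_seq => a /h. Qed.

Lemma msizeD_leq (p q : R) B :
  (msize p <= B)%N -> (msize q <= B)%N -> (msize (p + q) <= B)%N.
Proof. by move=> hp hq; apply: leq_trans (msizeD_le _ _) _; rewrite geq_max hp hq. Qed.

Lemma msize_sum_leq I (r : seq I) (P : pred I) (F : I -> R) B :
  (forall i, P i -> msize (F i) <= B)%N -> (msize (\sum_(i <- r | P i) F i) <= B)%N.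
Proof.
move=> h; apply: (big_ind (fun x => msize x <= B)%N) => //; first by rewrite msize0.
by move=> x y; apply: msizeD_leq.
Qed.

Lemma msizeM_leq (p q : R) : (msize (p * q) <= (msize p + msize q).-1)%N.
Proof.
have [->|p0] := eqVneq p 0; first by rewrite mul0r msize0.
have [->|q0] := eqVneq q 0; first by rewrite mulr0 msize0.
by rewrite msizeM.
Qed.

Lemma msizeX_leq (p : R) r : (msize (p ^+ r.+1) <= r.+1 * msize p - r)%N.
Proof.
elim: r => [|r ih]; first by rewrite expr1 mul1n subn0.
rewrite exprS; apply: leq_trans (msizeM_leq _ _) _.
move: ih; set s := msize p; set t := msize _; nia.
Qed.

Lemma msize_meuler i (p : R) : (msize (meuler i p) <= msize p)%N.
Proof.
apply: msize_le_mdeg => a; rewrite mcoeff_msupp mcoeff_meuler => h.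
apply: msize_mdeg_lt; rewrite mcoeff_msupp; apply: contraNN h => /eqP ->.
by rewrite mulr0.
Qed.

Lemma msize_euler_num i (p q : R) :
  (msize (euler_num i p q) <= (msize p + msize q).-1)%N.
Proof.
have hM (p' q' : R) : (msize p' <= msize p)%N -> (msize q' <= msize q)%N ->
    (msize (p' * q') <= (msize p + msize q).-1)%N.
  by move=> hp hq; apply: leq_trans (msizeM_leq _ _) _; lia.
by apply: msizeD_leq; rewrite ?msizeN; apply: hM; rewrite ?msize_meuler.
Qed.

Lemma msize_natM (p : R) (x : nat) : (msize (x%:R * p) <= msize p)%N.
Proof. by rewrite -mpolyC_nat mul_mpolyC msizeZ_le. Qed.

End SizeBounds.

Section UniqueTopMonomial.
Variables (k : fieldType) (n : nat).
Local Notation R := {mpoly k[n]}.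

Lemma euler_num_monomial_division i M (u Q P E : R) :
  u * 'X_[M] = Q * P + E ->
  'X_[M] * euler_num i u Q = Q ^+ 2 * (meuler i P - (M i)%:R * P) +
    (euler_num i E Q - (M i)%:R * (E * Q)).
Proof.
move=> uXM; have := congr1 (meuler i) uXM.
rewrite raddfD /= !meulerM meulerX -mul_mpolyC mpolyC_nat => duXM.
apply/eqP; rewrite -subr_eq0 /euler_num; apply/eqP.
transitivity (Q * ((meuler i u * 'X_[M] + u * ((M i)%:R * 'X_[M])) -
                   (meuler i Q * P + Q * meuler i P + meuler i E))
   - (meuler i Q + (M i)%:R * Q) * (u * 'X_[M] - (Q * P + E))); first by ring.
by rewrite uXM duXM !subrr; ring.
Qed.

Lemma mcoeff_meuler_shift i M (p : R) : (meuler i p - (M i)%:R * p)@_M = 0.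
Proof. by rewrite mcoeffB mcoeff_meuler -mpolyC_nat mcoeffCM subrr. Qed.

Variables (Q : R) (m : 'X_{1..n}).
Hypothesis Qm0 : Q@_m != 0.
Hypothesis Q_top : forall a, a \in msupp Q -> a != m -> (mdeg a < mdeg m)%N.
Local Notation D := (mdeg m).

Lemma msize_top : msize Q = D.+1.
Proof.
apply/eqP; rewrite eqn_leq; apply/andP; split.
  apply: msize_le_mdeg => a aQ; have [->//|ne] := eqVneq a m.
  exact/ltnW/Q_top.
by apply: msize_mdeg_lt; rewrite mcoeff_msupp.
Qed.

Let tail := 'X_[m] - (Q@_m)^-1 *: Q.

Lemma msize_tail : (msize tail <= D)%N.
Proof.
apply: msize_le_mdeg => a; rewrite mcoeff_msupp /tail mcoeffB mcoeffZ mcoeffX.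
have [<-|ne] := eqVneq m a; first by rewrite mulVf // subrr eqxx.
rewrite sub0r oppr_eq0 mulf_eq0 invr_eq0 (negbTE Qm0) /= => Qa.
by apply: Q_top; rewrite ?mcoeff_msupp // eq_sym.
Qed.

Lemma top_power_division N : exists S, 'X_[m *+ N.+1] = Q * S + tail ^+ N.+1.
Proof.
exists ((Q@_m)^-1 *: \sum_(j < N.+1) 'X_[m] ^+ (N.+1.-1 - j) * tail ^+ j).
apply/eqP; rewrite -mpolyXn -subr_eq subrXX.
have -> : 'X_[m] - tail = (Q@_m)^-1 *: Q by rewrite /tail opprB addrC subrK.
by rewrite -scalerAl scalerAr.
Qed.

Lemma msize_mul_tail_power (u : R) N :
  (msize u <= N)%N -> (msize (u * tail ^+ N.+1) <= (N.+1 * D).-1)%N.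
Proof.
move=> uN; have [D0|D_gt0] := posnP D.
  have tail0 : tail = 0 by apply/eqP; rewrite -msize_poly_eq0 -leqn0 -D0 msize_tail.
  by rewrite tail0 expr0n mulr0 msize0.
apply: leq_trans (msizeM_leq _ _) _.
have := msizeX_leq tail N; have : (N.+1 * msize tail <= N.+1 * D)%N.
  by rewrite leq_mul2l msize_tail orbT.
have : (N.+1 <= N.+1 * D)%N by rewrite leq_pmulr.
move: (msize u) uN (N.+1 * D)%N (N.+1 * msize tail)%N (msize (tail ^+ N.+1)).
move=> a ua ND Nt b; lia.
Qed.

(* With M = (N+1) m, write u_i x^M = Q P_i + E_i with E_i of low degree.  The
   hypothesis becomes G Q^2 = (terms built from the E_i), where
   G = c x^M - sum_i (d_i - M_i) P_i has coefficient c at x^M because d_i - M_i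
   kills that coefficient; for c != 0 the left side has too large a degree. *)
Lemma sum_euler_num_top_const (u : 'I_n -> R) (c : k) :
  \sum_i euler_num i (u i) Q = c%:MP * Q ^+ 2 -> c = 0.
Proof.
move=> sum_eq; pose N := (\max_i msize (u i))%N.
have [S XS] := top_power_division N; set M := (m *+ N.+1)%MM in XS.
pose P i := u i * S; pose E i := u i * tail ^+ N.+1.
have uXM i : u i * 'X_[M] = Q * P i + E i by rewrite XS mulrDr mulrCA.
pose G := c%:MP * 'X_[M] - \sum_i (meuler i (P i) - (M i)%:R * P i).
have GQ : G * Q ^+ 2 = \sum_i (euler_num i (E i) Q - (M i)%:R * (E i * Q)).
  transitivity ('X_[M] * (c%:MP * Q ^+ 2) -
      Q ^+ 2 * \sum_i (meuler i (P i) - (M i)%:R * P i)); first by rewrite /G; ring.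
  rewrite -sum_eq !mulr_sumr -sumrB; apply: eq_bigr => i _.
  by rewrite (euler_num_monomial_division i (uXM i)); ring.
have GM : G@_M = c.
  rewrite /G mcoeffB mcoeffCM mcoeffX eqxx mulr1 raddf_sum big1 ?subr0 // => i _.
  exact: mcoeff_meuler_shift.
have sizeE i : (msize (E i) <= (N.+1 * D).-1)%N.
  by apply: msize_mul_tail_power; exact: (@leq_bigmax _ (fun i => msize (u i)) i).
apply/eqP/negPn/negP => c0.
have G0 : G != 0 by apply: contraNneq c0 => G0; rewrite -GM G0 mcoeff0.
have sG : (N.+1 * D < msize G)%N.
  by rewrite mulnC -mdegMn; apply: msize_mdeg_lt; rewrite mcoeff_msupp GM.
have Q0 : Q != 0 by apply: contraNneq Qm0 => ->; rewrite mcoeff0.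
have sGQ : msize (G * Q ^+ 2) = (msize G + D + D)%N.
  by rewrite msizeM ?expf_neq0 // expr2 msizeM // msize_top addSn !addnS addnA.
have sR : (msize (G * Q ^+ 2) <= (N.+1 * D).-1 + D)%N.
  rewrite GQ; apply: msize_sum_leq => i _; apply: msizeD_leq; rewrite ?msizeN.
    by apply: leq_trans (msize_euler_num _ _ _) _; rewrite msize_top; have := sizeE i; lia.
  apply: leq_trans (msize_natM _ _) _; apply: leq_trans (msizeM_leq _ _) _.
  by rewrite msize_top; have := sizeE i; lia.
move: sR sG; rewrite sGQ; clearbody G N; lia.
Qed.

End UniqueTopMonomial.

Section WeightedSubstitution.
Variables (k : fieldType) (n : nat) (w : 'I_n -> nat).
Local Notation R := {mpoly k[n]}.

Definition wmnm (a : 'X_{1..n}) : 'X_{1..n} := [multinom (w i * a i)%N | i < n].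

Definition wsubst : R -> R := comp_mpoly [tuple 'X_[U_(i) *+ w i] | i < n].
Arguments wsubst : simpl never.
HB.instance Definition _ := GRing.RMorphism.on wsubst.

Lemma wsubstZ c p : wsubst (c *: p) = c *: wsubst p.
Proof. exact: comp_mpolyZ. Qed.

Lemma wsubstX a : wsubst 'X_[a] = 'X_[wmnm a].
Proof.
rewrite /wsubst comp_mpolyX.
under eq_bigr => i _ do rewrite tnth_mktuple.
rewrite mprodXnE; congr 'X_[_]; apply/mnmP => j.
rewrite mnm_sumE mnmE (bigD1 j) //= big1 => [|i ij].
  by rewrite mulmnE mulmnE mnm1E eqxx mul1n addn0.
by rewrite !mulmnE mnm1E (negbTE ij).
Qed.

Lemma wsubstE p : wsubst p = \sum_(a <- msupp p) p@_a *: 'X_[wmnm a].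
Proof. by rewrite /wsubst comp_mpolyEX; apply: eq_bigr => a _; rewrite -wsubstX. Qed.

Lemma meuler_wsubst i p : meuler i (wsubst p) = (w i)%:R *: wsubst (meuler i p).
Proof.
rewrite (mpolyE p) (raddf_sum wsubst) !(raddf_sum (meuler i)) (raddf_sum wsubst).
rewrite scaler_sumr; apply: eq_bigr => a _ /=.
rewrite wsubstZ !linearZ /= meulerX !wsubstZ !wsubstX meulerX mnmE !scalerA.
by rewrite natrM; congr (_ *: _); ring.
Qed.

Hypothesis w_gt0 : forall i, (0 < w i)%N.

Lemma wmnm_inj : injective wmnm.
Proof.
move=> a b /mnmP e; apply/mnmP => i; have := e i; rewrite !mnmE.
by move/eqP; rewrite eqn_pmul2l // => /eqP.
Qed.

Lemma mcoeff_wsubst p a : (wsubst p)@_(wmnm a) = p@_a.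
Proof.
rewrite wsubstE [p in RHS]mpolyE !raddf_sum /=; apply: eq_bigr => a' _.
by rewrite !mcoeffZ !mcoeffX (inj_eq wmnm_inj).
Qed.

Lemma msupp_wsubst p b :
  b \in msupp (wsubst p) -> exists2 a, a \in msupp p & b = wmnm a.
Proof.
move=> bp; have [/hasP[a ap /eqP <-]|/hasPn wb] := boolP (has (fun a => wmnm a == b) (msupp p)).
  by exists a.
move: bp; rewrite mcoeff_msupp wsubstE raddf_sum /= big1_seq ?eqxx // => a /andP[_ ap].
by rewrite mcoeffZ mcoeffX (negbTE (wb a ap)) mulr0.
Qed.

Lemma euler_num_wsubst i u q : (w i)%:R != 0 :> k ->
  euler_num i ((w i)%:R^-1 *: wsubst u) (wsubst q) = wsubst (euler_num i u q).
Proof.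
move=> w0; rewrite /euler_num linearZ /= !meuler_wsubst scalerA mulVf // scale1r.
rewrite -scalerAl -scalerAr scalerA mulVf // scale1r.
by rewrite /wsubst rmorphB /= !rmorphM.
Qed.

End WeightedSubstitution.

Lemma sum_digits_inj B N (f g : nat -> nat) :
  (forall i, i < N -> f i < B)%N -> (forall i, i < N -> g i < B)%N ->
  (\sum_(i < N) f i * B ^ i = \sum_(i < N) g i * B ^ i)%N ->
  forall i, (i < N)%N -> f i = g i.
Proof.
elim: N f g => [//|N ih] f g fB gB.
rewrite !big_ord_recl /= !expn0 !muln1.
under eq_bigr => i _ do rewrite /bump /= add1n expnS mulnCA.
under [in X in _ = X -> _]eq_bigr => i _ do rewrite /bump /= add1n expnS mulnCA.
rewrite -!big_distrr /= => e.
have B0 : (0 < B)%N by apply: leq_ltn_trans (fB 0%N isT).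
have e0 : f 0%N = g 0%N.
  have := congr1 (modn^~ B) e; rewrite /= !(addnC (f 0%N)) !(addnC (g 0%N)).
  by rewrite ![(B * _)%N]mulnC !modnMDl !modn_small ?fB ?gB.
move: e; rewrite e0 => /addnI /eqP; rewrite eqn_pmul2l // => /eqP e.
by move=> [|i] iN //; apply: (ih (f \o succn) (g \o succn)) => // j jN; [apply: fB|apply: gB].
Qed.

Lemma seq_argmax (T : eqType) (s : seq T) (f : T -> nat) :
  s != [::] -> exists2 x, x \in s & forall y, y \in s -> (f y <= f x)%N.
Proof.
elim: s => [//|x s ih] _; have [->|/ih[z zs zmax]] := eqVneq s [::].
  by exists x; rewrite ?mem_head // => y; rewrite mem_seq1 => /eqP ->.
have [xz|zx] := leqP (f x) (f z).
  by exists z => [|y]; rewrite in_cons ?zs ?orbT // => /predU1P[->|/zmax].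
exists x => [|y]; first exact: mem_head.
by rewrite in_cons => /predU1P[->//|/zmax/leq_trans]; apply; apply: ltnW.
Qed.

Lemma exists_weight_unique_top (R : nzRingType) (n : nat) (Q : {mpoly R[n]}) :
  Q != 0 -> exists2 w : 'I_n -> nat, (forall i, 0 < w i)%N &
    exists2 m, m \in msupp Q &
      forall a, a \in msupp Q -> a != m -> (mdeg (wmnm w a) < mdeg (wmnm w m))%N.
Proof.
move=> Q0; set B := (\max_(a <- msupp Q) \max_(i < n) a i).+1%N.
have digits (a : 'X_{1..n}) (i : 'I_n) : a \in msupp Q -> (a i < B)%N.
  move=> aQ; rewrite /B ltnS; apply: leq_trans (@leq_bigmax _ (fun i => a i) i) _.
  exact: (@leq_bigmax_seq _ _ xpredT (fun a : 'X_{1..n} => \max_(i < n) a i)%N _ aQ).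
(* The weighted degree of a monomial of Q is its base-B expansion. *)
pose w (i : 'I_n) := (B ^ i)%N.
exists w => [i|]; first by rewrite expn_gt0.
have mdegE a : mdeg (wmnm w a) = (\sum_(i < n) nth 0%N a i * B ^ i)%N.
  by rewrite mdegE; apply: eq_bigr => i _; rewrite mnmE -mnm_nth mulnC.
have [|m mQ mmax] := seq_argmax (fun a => mdeg (wmnm w a)) (_ : msupp Q != [::]).
  by rewrite msupp_eq0.
exists m => // a aQ am; rewrite ltn_neqAle mmax // andbT; apply: contra am => /eqP e.
apply/eqP/mnmP => i; rewrite !(mnm_nth 0%N); move: e; rewrite !mdegE.
move/sum_digits_inj; apply=> [j jn|j jn|]; last exact: ltn_ord.
  by have := digits a (Ordinal jn) aQ; rewrite (mnm_nth 0%N).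
by have := digits m (Ordinal jn) mQ; rewrite (mnm_nth 0%N).
Qed.

Lemma sum_euler_num_const (k : fieldType) (n : nat) (Q : {mpoly k[n]})
    (u : 'I_n -> {mpoly k[n]}) (c : k) :
  [pchar k] =i pred0 -> Q != 0 ->
  \sum_i euler_num i (u i) Q = c%:MP * Q ^+ 2 -> c = 0.
Proof.
move=> char0 Q0 sum_eq; have [w w_gt0 [m mQ mtop]] := exists_weight_unique_top Q0.
have w0 i : (w i)%:R != 0 :> k by have /pcharf0P -> := char0; rewrite -lt0n.
have wQm : (wsubst w Q)@_(wmnm w m) != 0 by rewrite mcoeff_wsubst // -mcoeff_msupp.
have wQ_top b : b \in msupp (wsubst w Q) -> b != wmnm w m ->
    (mdeg b < mdeg (wmnm w m))%N.
  by case/msupp_wsubst => a aQ -> am; apply: mtop aQ _; apply: contra_neq am => ->.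
apply: (sum_euler_num_top_const wQm wQ_top (u := fun i => (w i)%:R^-1 *: wsubst w (u i))).
under eq_bigr => i _ do rewrite euler_num_wsubst //.
by rewrite -rmorph_sum sum_eq rmorphM rmorphXn /= /wsubst comp_mpolyC.
Qed.

HB.instance Definition _ (k : fieldType) (n : nat) :=
  GRing.RMorphism.copy (@ratC k n) (@tofrac {mpoly k[n]} \o mpolyC n (R:=k)).

Section BracketSpan.
Variables (k : fieldType) (n : nat).
Local Notation R := {mpoly k[n]}.
Local Notation K := (ratfun k n).
Local Notation "x %:F" := (@tofrac R x).

Hypothesis char0 : [pchar k] =i pred0.

Lemma sum_feuler_const (H : 'I_n -> K) c : \sum_i feuler i (H i) = ratC n c -> c = 0.
Proof.
pose a i := \n_(repr (H i)); pose b i := \d_(repr (H i)).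
have b0 i : b i != 0 by apply: denom_ratioP.
pose Q := \prod_i b i; pose u i := a i * \prod_(j | j != i) b j.
have Q0 : Q != 0 by apply/prodf_neq0 => i _.
have HQ i : H i = (u i)%:F / Q%:F.
  rewrite [H i]tofrac_repr -/(a i) -/(b i); apply: tofrac_div_congr => //.
  by rewrite /Q /u (bigD1 i) //=; ring.
under eq_bigr => i _ do rewrite HQ feuler_frac //.
rewrite -mulr_suml -rmorph_sum /ratC => /(congr1 (fun t => t * (Q ^+ 2)%:F)).
rewrite mulfVK ?tofrac_eq0 ?expf_neq0 // -tofracM => /eqP; rewrite tofrac_eq => /eqP.
exact: sum_euler_num_const.
Qed.

Variable lam : 'M[k]_n.
Hypothesis lam_antisym : lam^T = - lam.

Lemma pbracketE f g :
  pbracket lam f g = \sum_i \sum_j ratC n (lam i j) * feuler i f * feuler j g.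
Proof. by apply: eq_bigr => i _; apply: eq_bigr => j _; rewrite /feuler; ring. Qed.

Lemma antisym_sum_sym0 (T : 'I_n -> 'I_n -> K) : (forall i j, T i j = T j i) ->
  \sum_i \sum_j ratC n (lam i j) * T i j = 0.
Proof.
move=> T_sym; set S := (X in X = 0).
have SN : S = - S.
  rewrite {1}/S exchange_big /= /S -sumrN; apply: eq_bigr => i _.
  rewrite -sumrN; apply: eq_bigr => j _.
  have -> : lam j i = - lam i j.
    by have := congr1 (fun M : 'M[k]_n => M i j) lam_antisym; rewrite !mxE.
  by rewrite rmorphN T_sym mulNr.
have two0 : (2%:R : K) != 0.
  by rewrite -(rmorph_nat (@tofrac R)) tofrac_eq0 -mpolyC_nat mpolyC_eq0 ((pcharf0P _).1 char0).
have : S * 2%:R = 0 by rewrite mulr_natr mulr2n {1}SN addNr.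
by move/eqP; rewrite mulf_eq0 (negbTE two0) orbF => /eqP.
Qed.

Lemma pbracket_divergence f g :
  pbracket lam f g = \sum_i feuler i (\sum_j ratC n (lam i j) * (f * feuler j g)).
Proof.
rewrite pbracketE.
have -> : \sum_i feuler i (\sum_j ratC n (lam i j) * (f * feuler j g)) =
   \sum_i \sum_j ratC n (lam i j) * feuler i f * feuler j g +
   f * \sum_i \sum_j ratC n (lam i j) * feuler i (feuler j g).
  rewrite mulr_sumr -big_split /=; apply: eq_bigr => i _.
  rewrite raddf_sum mulr_sumr -big_split /=; apply: eq_bigr => j _.
  by rewrite feulerCM feulerM; ring.
by rewrite antisym_sum_sym0 ?mulr0 ?addr0 // => i j; apply: feuler_comm.
Qed.

Lemma pbracket_span_const0 (s : seq (k * K * K)) (c : k) :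
  \sum_(t <- s) ratC n t.1.1 * pbracket lam t.1.2 t.2 = ratC n c -> c = 0.
Proof.
move=> span_eq; apply: (@sum_feuler_const (fun i => \sum_(t <- s) ratC n t.1.1 *
   \sum_j ratC n (lam i j) * (t.1.2 * feuler j t.2))).
rewrite -span_eq; under eq_bigr => i _ do rewrite raddf_sum.
rewrite exchange_big /=; apply: eq_bigr => t _.
by rewrite pbracket_divergence mulr_sumr; apply: eq_bigr => i _; rewrite feulerCM.
Qed.

End BracketSpan.

Section LeadingExponents.
Variables (k : fieldType) (n : nat).
Local Notation R := {mpoly k[n]}.

Lemma mlead_meuler a (p : R) : (mlead (meuler a p) <= mlead p)%O.
Proof.
have [->|nz] := eqVneq (meuler a p) 0; first by rewrite mlead0 le0m.
apply: msupp_le_mlead; have := mlead_supp nz; rewrite !mcoeff_msupp mcoeff_meuler.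
by apply: contraNN => /eqP ->; rewrite mulr0.
Qed.

Lemma euler_num_lead a (p q : R) : p != 0 -> q != 0 ->
  (mlead (euler_num a p q) <= mlead (p * q))%O /\
  (euler_num a p q)@_(mlead (p * q)) =
    ((mlead p a)%:R - (mlead q a)%:R) * mleadc (p * q).
Proof.
move=> p0 q0; rewrite mleadM //; split.
  apply: le_trans (mleadB_le _ _) _; rewrite leUx; apply/andP; split;
    apply: le_trans (mleadM_le _ _) _; apply: lem_add => //; exact: mlead_meuler.
by rewrite mcoeffB !mleadcMW ?mlead_meuler // !mcoeff_meuler; ring.
Qed.

Variable lam : 'M[k]_n.

Lemma euler_form_constE (p1 q1 p2 q2 : R) (x : k) :
  p1 != 0 -> q1 != 0 -> p2 != 0 -> q2 != 0 ->
  \sum_a \sum_b (lam a b)%:MP * euler_num a p1 q1 * euler_num b p2 q2 =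
    x%:MP * (p1 * q1 * (p2 * q2)) ->
  x = \sum_a \sum_b lam a b * ((mlead p1 a)%:R - (mlead q1 a)%:R) *
                            ((mlead p2 b)%:R - (mlead q2 b)%:R).
Proof.
move=> p10 q10 p20 q20 /(congr1 (mcoeff (mlead (p1 * q1) + mlead (p2 * q2)))).
rewrite mcoeffCM mleadcM raddf_sum /= => e.
apply: (mulIf (_ : mleadc (p1 * q1) * mleadc (p2 * q2) != 0)).
  by rewrite mulf_neq0 // mleadc_eq0 mulf_neq0.
rewrite -e mulr_suml; apply: eq_bigr => a _.
rewrite raddf_sum mulr_suml /=; apply: eq_bigr => b _.
have [l1 c1] := euler_num_lead a p10 q10; have [l2 c2] := euler_num_lead b p20 q20.
by rewrite -mulrA mcoeffCM mleadcMW // c1 c2; ring.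
Qed.

End LeadingExponents.

Definition intpos (z : int) : nat := if 0 <= z then `|z|%N else 0.
Definition intneg (z : int) : nat := if 0 <= z then 0 else `|z|%N.

Lemma intposBneg (R : pzRingType) (z : int) : (intpos z)%:R - (intneg z)%:R = z%:~R :> R.
Proof. by rewrite /intpos /intneg; case: z => m /=; rewrite ?subr0 // sub0r NegzE mulrNz. Qed.

Section LogarithmicMatrix.
Variables (k : fieldType) (n : nat) (lam : 'M[k]_n).
Local Notation R := {mpoly k[n]}.
Local Notation K := (ratfun k n).
Local Notation "x %:F" := (@tofrac R x).

Lemma CmatE (y : 'I_n -> K) i j : Cmat lam y i j =
  \sum_a \sum_b ratC n (lam a b) * (feuler a (y i) / y i) * (feuler b (y j) / y j).
Proof.
rewrite mxE pbracketE mulr_suml; apply: eq_bigr => a _.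
by rewrite mulr_suml; apply: eq_bigr => b _; rewrite invfM; ring.
Qed.

Lemma feuler_frac_div a (p q : R) : p != 0 -> q != 0 ->
  feuler a (p%:F / q%:F) / (p%:F / q%:F) = (euler_num a p q)%:F / (p * q)%:F.
Proof.
move=> p0 q0; rewrite feuler_frac // invf_div tofrac_divM.
by apply: tofrac_div_congr; rewrite ?mulf_neq0 ?expf_neq0 //; ring.
Qed.

Lemma feuler_div_monomial a (al be : 'X_{1..n}) :
  let y := ('X_[al] : R)%:F / ('X_[be] : R)%:F in
  feuler a y / y = ratC n ((al a)%:R - (be a)%:R).
Proof.
have X0 (m : 'X_{1..n}) : ('X_[m] : R) != 0 by rewrite -msupp_eq0 msuppX.
rewrite /= feuler_frac_div // /euler_num !meulerX -scalerAl -scalerAr -scalerBl.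
by rewrite -mul_mpolyC tofracM mulfK // tofrac_eq0 mulf_neq0.
Qed.

Lemma Cmat_monomials (A : 'M[int]_n) : exists2 y : 'I_n -> K, (forall i, y i != 0) &
  Cmat lam y = map_mx (@ratC k n) (map_mx intr A *m lam *m (map_mx intr A)^T).
Proof.
pose y i := ('X_[[multinom intpos (A i c) | c < n]] : R)%:F /
            ('X_[[multinom intneg (A i c) | c < n]] : R)%:F.
have logy i a : feuler a (y i) / y i = ratC n (A i a)%:~R.
  by rewrite feuler_div_monomial !mnmE intposBneg.
exists y => [i|]; first by rewrite mulf_neq0 ?invr_eq0 ?tofrac_eq0 -?msupp_eq0 ?msuppX.
apply/matrixP => i j; rewrite CmatE !mxE.
under eq_bigr => a _ do under eq_bigr => b _ do rewrite !logy.
rewrite rmorph_sum exchange_big /=; apply: eq_bigr => b _.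
rewrite !mxE rmorphM rmorph_sum mulr_suml; apply: eq_bigr => a _.
by rewrite !mxE !rmorphM; ring.
Qed.

Lemma Cmat_const_exponents (M : 'M[k]_n) (y : 'I_n -> K) :
  (forall i, y i != 0) -> Cmat lam y = map_mx (@ratC k n) M ->
  exists A : 'M[int]_n, M = map_mx intr A *m lam *m (map_mx intr A)^T.
Proof.
move=> y0 CyM.
have mul_divK (F : fieldType) (x a b c d : F) : c != 0 -> d != 0 ->
    x * (a / c) * (b / d) * (c * d) = x * a * b.
  by move=> c0 d0; field; rewrite c0 d0.
pose p i := \n_(repr (y i)); pose q i := \d_(repr (y i)).
have q0 i : q i != 0 by apply: denom_ratioP.
have yE i : y i = (p i)%:F / (q i)%:F by apply: tofrac_repr.
have p0 i : p i != 0 by apply: contraNneq (y0 i) => e; rewrite yE e tofrac0 mul0r.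
exists (\matrix_(i, a) ((mlead (p i) a)%:Z - (mlead (q i) a)%:Z)); apply/matrixP => i j.
rewrite !mxE (euler_form_constE (p0 i) (q0 i) (p0 j) (q0 j) (lam := lam) (x := M i j)).
  rewrite exchange_big /=; apply: eq_bigr => b _; rewrite !mxE mulr_suml.
  by apply: eq_bigr => a _; rewrite !mxE !intrB !pmulrn; ring.
apply/eqP; rewrite -tofrac_eq tofracM -/(ratC n (M i j)); apply/eqP.
have -> : ratC n (M i j) = Cmat lam y i j by rewrite CyM mxE.
rewrite CmatE (yE i) (yE j) rmorph_sum mulr_suml; apply: eq_bigr => a _.
rewrite rmorph_sum mulr_suml; apply: eq_bigr => b _.
rewrite /= !feuler_frac_div // (tofracM (p i * q i)) mul_divK ?tofrac_eq0 ?mulf_neq0 //.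
by rewrite /ratC -!tofracM.
Qed.

End LogarithmicMatrix.

Theorem proposition5p2 (k : fieldType) (n : nat) (lam : 'M[k]_n) :
  [pchar k] =i pred0 ->
  lam^T = - lam ->
  (forall (s : seq (k * ratfun k n * ratfun k n)) (c : k),
      \sum_(t <- s) ratC n t.1.1 * pbracket lam t.1.2 t.2 = ratC n c ->
      c = 0)
  /\
  (forall M : 'M[k]_n,
      (exists y : 'I_n -> ratfun k n,
          (forall i, y i != 0) /\ Cmat lam y = map_mx (@ratC k n) M)
      <->
      (exists A : 'M[int]_n,
          M = map_mx intr A *m lam *m (map_mx intr A)^T)).
Proof.
move=> char0 lam_antisym; split; first exact: pbracket_span_const0.
move=> M; split; first by case=> y [y0 CyM]; apply: Cmat_const_exponents y0 CyM.
by case=> A ->; have [y y0 CyA] := Cmat_monomials lam A; exists y.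
Qed.
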